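(* Let $p\equiv 1\pmod 4$ be a prime. For all $\delta_1,\delta_2\in\{\pm1\}$, the residue class \[ 2\det\left[\left(\tfrac{j+k}{p}\right)+\left(\tfrac{j-k}{p}\right)+\delta_1\left(\tfrac{j^2+\delta_2k^2}{p}\right)\right]_{0\le j,k\le (p-1)/2} \] is a nonzero quadratic residue modulo $p$. More precisely, writing $p=4m+1$, \[ \det\left[\left(\tfrac{j+k}{p}\right)+\left(\tfrac{j-k}{p}\right)+\delta_1\left(\tfrac{j^2+\delta_2k^2}{p}\right)\right]_{0\le j,k\le 2m} \equiv(-1)^{m(2m+1)}\delta_1^{2m+1}\delta_2^{m(2m+1)}\left(\prod_{r=0}^{2m}\binom{2m}{r}\right)\prod_{0\le i<j\le 2m}(j^2-i^2)^2\pmod p. \]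
   Context: $\left(\frac{t}{p}\right)$ denotes the Legendre symbol modulo $p$, with $\left(\frac{0}{p}\right)=0$. *)

From mathcomp Require Import all_boot all_order all_algebra.
Set Implicit Arguments. Unset Strict Implicit. Unset Printing Implicit Defensive.
Import Order.TTheory GRing.Theory Num.Theory.
Local Open Scope ring_scope.

Definition legendre (t : int) (p : nat) : int :=
  if (p%:Z %| t)%Z then 0
  else if [exists x : 'I_p, (p%:Z %| (x%:Z ^+ 2 - t))%Z] then 1 else -1.

Definition cor_mx (m p : nat) (d1 d2 : int) : 'M[int]_((2 * m).+1) :=
  \matrix_(j, k) (legendre (j%:Z + k%:Z) p + legendre (j%:Z - k%:Z) p
                  + d1 * legendre (j%:Z ^+ 2 + d2 * k%:Z ^+ 2) p).

Definition cor_rhs (m : nat) (d1 d2 : int) : int :=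
  (-1) ^+ (m * (2 * m).+1) * d1 ^+ (2 * m).+1 * d2 ^+ (m * (2 * m).+1)
  * (\prod_(r < (2 * m).+1) ('C(2 * m, r))%:Z)
  * \prod_(j < (2 * m).+1) \prod_(i < (2 * m).+1 | (i < j)%N)
      ((j%:Z ^+ 2 - i%:Z ^+ 2) ^+ 2).

(* Over F_p, Euler's criterion turns every Legendre symbol (t/p) into t^(2m), so the
   matrix becomes [(j+k)^(2m) + (j-k)^(2m) + d1 (j^2 + d2 k^2)^(2m)]_(j,k).  Expanding
   in powers of j^2 and k^2 factors it as V^T C V, where V is the Vandermonde matrix of
   the nodes 0^2, ..., (2m)^2 and C is the coefficient matrix, which vanishes below its
   antidiagonal; det C * (det V)^2 is exactly the right-hand side.
   For the residue claim, prod_r C(2m,r) * (prod_r r!)^2 = ((2m)!)^(2m+1) and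
   ((2m)!)^2 = -1 by Wilson's theorem, so 2 det is +-2 (2m)! times a nonzero square;
   both signs are squares since (1 + i)^2 = 2i and (i (1 + i))^2 = -2i when i^2 = -1. *)

From mathcomp Require Import all_boot all_algebra all_field.
From mathcomp Require Import zify ring.
Set Implicit Arguments. Unset Strict Implicit. Unset Printing Implicit Defensive.
Import GRing.Theory.
Local Open Scope ring_scope.

Section PrimeField.

Variable p : nat.
Hypothesis p_pr : prime p.

Lemma Fp_intr_eq0 (z : int) : ((z%:~R : 'F_p) == 0) = (p%:Z %| z)%Z.
Proof.
rewrite dvdzE; case: z => n /=; first by rewrite (dvdn_pcharf (pchar_Fp p_pr)).
by rewrite NegzE rmorphN /= oppr_eq0 (dvdn_pcharf (pchar_Fp p_pr)).
Qed.

Lemma Fp_eqz_mod (a b : int) : (a == b %[mod p%:Z])%Z = (a%:~R == b%:~R :> 'F_p).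
Proof. by rewrite eqz_mod_dvd -Fp_intr_eq0 rmorphB subr_eq0. Qed.

Lemma Fp_sqr_modz (a : int) :
  (exists y : 'F_p, y ^+ 2 = a%:~R) -> exists x : int, (x ^+ 2 == a %[mod p%:Z])%Z.
Proof.
by move=> [y ya]; exists (y : nat)%:Z; rewrite Fp_eqz_mod rmorphXn /= -pmulrn natr_Zp ya.
Qed.

Lemma Fp_natr_eq (i j : nat) : (i%:R == j%:R :> 'F_p) = (i == j %[mod p])%N.
Proof. by rewrite -val_eqE /= !val_Fp_nat. Qed.

Lemma Fp_sqr_natr_eq (i j : nat) :
  (i + j < p)%N -> ((i%:R : 'F_p) ^+ 2 == j%:R ^+ 2) = (i == j).
Proof.
move=> ijp; rewrite eqf_sqr Fp_natr_eq !modn_small; try lia.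
have [//|neq_ij] := eqVneq i j.
by rewrite -addr_eq0 -natrD -(dvdn_pcharf (pchar_Fp p_pr)) gtnNdvd //; lia.
Qed.

Lemma Fp_expr_pred (x : 'F_p) : x != 0 -> x ^+ p.-1 = 1.
Proof.
move=> x0; apply: (mulIf x0); rewrite mul1r -exprSr prednK ?prime_gt0 //.
by have := expf_card x; rewrite card_Fp.
Qed.

Variable n : nat.
Hypothesis p_eq : p = (2 * n).+1.

Let n_gt0 : (0 < n)%N.
Proof. by move: (prime_gt1 p_pr); rewrite p_eq; lia. Qed.

Let p_pred : p.-1 = (2 * n)%N.
Proof. by rewrite p_eq. Qed.

Lemma Fp_unity_root_halfE :
  n.-unity_root =i [seq (k.+1%:R : 'F_p) ^+ 2 | k <- iota 0 n].
Proof.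
apply: mem_unity_roots => //; last by rewrite size_map size_iota.
  apply/allP => x /mapP[k]; rewrite mem_iota => /andP[_ kn] ->.
  rewrite unity_rootE -exprM -p_pred Fp_expr_pred //.
  by rewrite -(dvdn_pcharf (pchar_Fp p_pr)) gtnNdvd //; lia.
rewrite map_inj_in_uniq ?iota_uniq // => i j; rewrite !mem_iota => iP jP /eqP.
by rewrite Fp_sqr_natr_eq => [/eqP[]|]; lia.
Qed.

Lemma Fp_euler_criterion (t : int) : ((legendre t p)%:~R : 'F_p) = t%:~R ^+ n.
Proof.
rewrite /legendre -Fp_intr_eq0; have [->|t0] := eqVneq (t%:~R : 'F_p) 0.
  by rewrite expr0n gtn_eqF.
case: ifPn => [/existsP[x]|/existsP no_sqrt].
  rewrite -Fp_intr_eq0 rmorphB rmorphXn subr_eq0 => /eqP tE.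
  rewrite -tE -exprM -p_pred Fp_expr_pred //.
  by apply: contraNneq t0 => x0; rewrite -tE x0 expr0n.
have /eqP := Fp_expr_pred t0; rewrite p_pred mulnC exprM sqrf_eq1.
case/orP=> [tn1|/eqP-> //].
have := Fp_unity_root_halfE t%:~R; rewrite -topredE /= unity_rootE tn1 => /esym.
case/mapP=> k; rewrite mem_iota => /andP[_ kn] tE; case: no_sqrt.
have kp : (k.+1 < p)%N by lia.
by exists (Ordinal kp); rewrite -Fp_intr_eq0 rmorphB rmorphXn /= -tE subrr.
Qed.

Lemma Fp_fact_half_sqr : ((n`!)%:R : 'F_p) ^+ 2 = - (-1) ^+ n.
Proof.
have wilson : ((2 * n)`!%:R : 'F_p) = -1.
  apply/eqP; rewrite -addr_eq0 -(natrD _ _ 1) addn1.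
  by rewrite -(dvdn_pcharf (pchar_Fp p_pr)) -p_pred -Wilson ?prime_gt1.
have fact_prod_ord k : (k`!)%:R = \prod_(i < k) (i.+1%:R : 'F_p).
  by rewrite fact_prod big_add1 /= big_mkord natr_prod.
have upper_half : ((2 * n) ^_ n)%:R = (-1) ^+ n * n`!%:R :> 'F_p.
  rewrite ffact_prod natr_prod fact_prod_ord -[n in (-1) ^+ n]card_ord -prodrN.
  apply: eq_bigr => i _; apply/eqP; rewrite -addr_eq0 -natrD.
  rewrite -(dvdn_pcharf (pchar_Fp p_pr)) (_ : (2 * n - i + i.+1 = p)%N) //.
  by rewrite p_eq; have := ltn_ord i; lia.
move: wilson; rewrite -(ffact_fact (leq_pmull n (isT : 0 < 2)%N)).
rewrite (_ : (2 * n - n = n)%N); last by lia.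
rewrite natrM upper_half -mulrA => wilson.
have sign_sqr : (-1) ^+ n * (-1) ^+ n = 1 :> 'F_p by rewrite -expr2 sqrr_sign.
set s := (-1) ^+ n in wilson sign_sqr *.
by rewrite -mulrN1 -wilson (mulrA s s) sign_sqr mul1r expr2.
Qed.

End PrimeField.

Lemma sum_ord_even (R : nmodType) m (g : nat -> R) :
  (forall i, odd i -> g i = 0) ->
  \sum_(i < (2 * m).+1) g i = \sum_(s < m.+1) g (2 * s)%N.
Proof.
move=> g_odd; elim: m => [|m IHm]; first by rewrite !big_ord1.
rewrite (_ : (2 * m.+1).+1 = (2 * m).+3)%N; last by lia.
rewrite big_ord_recr big_ord_recr /= IHm g_odd ?addr0 /=; last by rewrite oddM.
by rewrite [RHS]big_ord_recr /= (_ : (2 * m).+2 = 2 * m.+1)%N; last by lia.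
Qed.

Lemma exprD_add_exprB (R : comPzRingType) m (x y : R) :
  (x + y) ^+ (2 * m) + (x - y) ^+ (2 * m) =
  \sum_(s < m.+1) (x ^+ 2) ^+ (m - s) * (y ^+ 2) ^+ s *+ ('C(2 * m, 2 * s)).*2.
Proof.
pose g i := (1 + (-1) ^+ i) * (x ^+ (2 * m - i) * y ^+ i) *+ 'C(2 * m, i).
have -> : (x + y) ^+ (2 * m) + (x - y) ^+ (2 * m) = \sum_(i < (2 * m).+1) g i.
  by rewrite exprDn exprBn -big_split; apply: eq_bigr => i _ /=; rewrite /g; ring.
rewrite sum_ord_even => [|i i_odd]; last first.
  by rewrite /g -signr_odd i_odd expr1 subrr mul0r mul0rn.
apply: eq_bigr => s _; rewrite /g -mulnBr !exprM sqrrN !expr1n -muln2 mulrnA.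
by rewrite mulrDl mul1r mulrnDl mulr2n.
Qed.

Definition coef_mx (R : pzSemiRingType) m (a b : R) : 'M[R]_((2 * m).+1) :=
  \matrix_(t, s) ((t + s == 2 * m)%N%:R * (a * b ^+ s *+ 'C(2 * m, s))
                  + (t + s == m)%N%:R * ('C(2 * m, 2 * s)).*2%:R).

Lemma sum_ord_addn_eq (R : pzSemiRingType) N s c (F : nat -> R) :
  (c < N + s)%N -> \sum_(t < N) (t + s == c)%N%:R * F t = (s <= c)%N%:R * F (c - s)%N.
Proof.
move=> cNs; have [sc | cs] := leqP s c; last first.
  by rewrite big1 ?mul0r // => t _; rewrite (_ : (t + s == c)%N = false) ?mul0r //; lia.
have cs_lt : (c - s < N)%N by lia.
rewrite (bigD1 (Ordinal cs_lt)) //= subnK // eqxx big1 ?addr0 // => t neq_t.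
rewrite (_ : (t + s == c)%N = false) ?mul0r //; apply: contraNF neq_t => /eqP ts.
by apply/eqP/val_inj => /=; lia.
Qed.

Lemma coef_mx_expand (R : comPzRingType) m (a b x y : R) :
  (x + y) ^+ (2 * m) + (x - y) ^+ (2 * m) + a * (x ^+ 2 + b * y ^+ 2) ^+ (2 * m) =
  \sum_(s < (2 * m).+1)
     (\sum_(t < (2 * m).+1) (x ^+ 2) ^+ t * coef_mx m a b t s) * (y ^+ 2) ^+ s.
Proof.
transitivity (\sum_(s < (2 * m).+1)
   ((x ^+ 2) ^+ (2 * m - s) * (a * b ^+ s *+ 'C(2 * m, s))
    + (s <= m)%N%:R * ((x ^+ 2) ^+ (m - s) * ('C(2 * m, 2 * s)).*2%:R)) * (y ^+ 2) ^+ s); last first.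
  apply: eq_bigr => s _; congr (_ * _).
  under eq_bigr => t _ do rewrite mxE mulrDr mulrCA [_ * (_%:R * _)]mulrCA.
  by rewrite big_split /= !(sum_ord_addn_eq (fun t => (x ^+ 2) ^+ t * _)) ?leq_ord ?mul1r //; lia.
under [RHS]eq_bigr => s _ do rewrite mulrDl.
rewrite big_split /= addrC exprD_add_exprB; congr (_ + _).
  pose h s := (x ^+ 2) ^+ (m - s) * (y ^+ 2) ^+ s *+ ('C(2 * m, 2 * s)).*2.
  rewrite (big_ord_widen (2 * m).+1 h) ?big_mkcond /=; last by lia.
  apply: eq_bigr => s _; rewrite ltnS /h.
  by case: leqP => _; rewrite ?mul0r ?mul1r // -mulr_natr; ring.
rewrite exprDn mulr_sumr; apply: eq_bigr => s _ /=; rewrite [(b * _) ^+ _]exprMn; ring.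
Qed.

Lemma coef_mx_factor (R : comPzRingType) m (a b : R) (x : 'I_(2 * m).+1 -> R) :
  let V := Vandermonde (2 * m).+1 (\row_k x k ^+ 2) in
  \matrix_(j, k) ((x j + x k) ^+ (2 * m) + (x j - x k) ^+ (2 * m)
                  + a * (x j ^+ 2 + b * x k ^+ 2) ^+ (2 * m))
  = V^T *m coef_mx m a b *m V.
Proof.
apply/matrixP => j k; rewrite !mxE coef_mx_expand; apply: eq_bigr => s _.
by rewrite !mxE; congr (_ * _); apply: eq_bigr => t _; rewrite !mxE.
Qed.

Lemma det_anti_trig (R : comPzRingType) n (A : 'M[R]_n) :
  (forall i j : 'I_n, (n <= i + j)%N -> A i j = 0) ->
  \det A = (-1) ^+ 'C(n, 2) * \prod_(i < n) A (rev_ord i) i.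
Proof.
elim: n A => [|n IHn] A A_anti; first by rewrite det_mx00 big_ord0 mulr1.
rewrite (expand_det_col _ ord_max) (bigD1 ord0) //= big1 ?addr0 => [|i i_neq0]; last first.
  by rewrite A_anti ?mul0r //=; move: i_neq0; rewrite -val_eqE /=; lia.
rewrite /cofactor IHn => [|i j ij]; last first.
  by rewrite !mxE A_anti //= /bump leq0n; case: leqP => /=; lia.
rewrite [in RHS]big_ord_recr /= binS bin1.
have -> : rev_ord (@ord_max n) = ord0 by apply: val_inj; rewrite /= subnn.
have -> : \prod_(i < n) row' ord0 (col' ord_max A) (rev_ord i) i =
          \prod_(i < n) A (rev_ord (widen_ord (leqnSn n) i)) (widen_ord (leqnSn n) i).
  apply: eq_bigr => i _; rewrite !mxE.
  by congr (A _ _); apply: val_inj; rewrite /= /bump; case: leqP; have := ltn_ord i; lia.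
by rewrite !exprD expr0; ring.
Qed.

Lemma det_coef_mx (R : comPzRingType) m (a b : R) : (0 < m)%N ->
  \det (coef_mx m a b) = (-1) ^+ (m * (2 * m).+1) * a ^+ (2 * m).+1
    * b ^+ (m * (2 * m).+1) * \prod_(s < (2 * m).+1) ('C(2 * m, s))%:R.
Proof.
move=> m_gt0; have bin2_odd : 'C((2 * m).+1, 2) = (m * (2 * m).+1)%N.
  by rewrite bin2odd -?pred_Sn ?mul2n ?doubleK ?(mulnC m) //= odd_double.
rewrite det_anti_trig => [|t s ts]; last first.
  by rewrite mxE; do 2![case: eqP => [?|_]; first lia]; rewrite !mul0r addr0.
have -> : \prod_(s < (2 * m).+1) coef_mx m a b (rev_ord s) s =
          \prod_(s < (2 * m).+1) (a * b ^+ s * ('C(2 * m, s))%:R).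
  apply: eq_bigr => s _; rewrite mxE /= subSS subnK ?leq_ord // eqxx mul1r.
  by case: eqP => [?|_]; [lia | rewrite mul0r addr0 mulr_natr].
rewrite !big_split /= prodr_const card_ord prodrXr -(big_mkord xpredT id) bin2_sum.
by rewrite bin2_odd !mulrA.
Qed.

Definition sqr_vandermonde (R : pzRingType) n : 'M[R]_n :=
  Vandermonde n (\row_(k < n) (k%:R : R) ^+ 2).

Lemma det_sqr_vandermonde (R : comPzRingType) n :
  \det (sqr_vandermonde R n) =
  \prod_(j < n) \prod_(i < n | (i < j)%N) (j%:R ^+ 2 - i%:R ^+ 2).
Proof.
rewrite det_Vandermonde; under eq_bigr do rewrite big_mkcond.
rewrite exchange_big; apply: eq_bigr => j _; rewrite [RHS]big_mkcond.
by apply: eq_bigr => i _; rewrite !mxE.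
Qed.

Lemma prod_bin_fact n :
  (\prod_(r < n.+1) 'C(n, r) * (\prod_(r < n.+1) r`!) ^ 2 = n`! ^ n.+1)%N.
Proof.
rewrite -mulnn [X in (_ * (_ * X))%N](reindex_inj rev_ord_inj) -!big_split /=.
rewrite -[n.+1 in RHS]card_ord -prod_nat_const; apply: eq_bigr => r _.
by rewrite subSS bin_fact // -ltnS.
Qed.

Lemma sqr_sign_two_sqrtN1 (R : idomainType) (u i : R) :
  u ^+ 2 = 1 -> i ^+ 2 = -1 -> exists y, y ^+ 2 = u * (2 * i).
Proof.
move=> /eqP; rewrite sqrf_eq1 => /orP[] /eqP-> i2.
  by exists (1 + i); rewrite sqrrD i2; ring.
by exists (i * (1 + i)); rewrite exprMn sqrrD i2; ring.
Qed.

Lemma intr_cor_rhs (R : comNzRingType) m d1 d2 : (0 < m)%N ->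
  (cor_rhs m d1 d2)%:~R = \det (coef_mx m (d1%:~R : R) d2%:~R)
                          * \det (sqr_vandermonde R (2 * m).+1) ^+ 2.
Proof.
move=> m_gt0; rewrite det_coef_mx // det_sqr_vandermonde /cor_rhs.
rewrite !rmorphM !rmorphXn rmorphN1 /= !rmorph_prod -!prodrXl; congr (_ * _ * _).
apply: eq_bigr => j _; rewrite rmorph_prod -prodrXl; apply: eq_bigr => i _.
by rewrite rmorphXn rmorphB !rmorphXn /= -!pmulrn.
Qed.

Section Corollary.

Variables (m p : nat).
Hypotheses (p_pr : prime p) (p_eq : p = (2 * (2 * m)).+1).

Let m_gt0 : (0 < m)%N.
Proof. by move: (prime_gt1 p_pr); rewrite p_eq; lia. Qed.

Local Notation V := (sqr_vandermonde 'F_p (2 * m).+1).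

Lemma sqr_vandermonde_Fp_neq0 : \det V != 0.
Proof.
rewrite det_sqr_vandermonde; apply/prodf_neq0 => j _; apply/prodf_neq0 => i ij.
rewrite subr_eq0 eq_sym Fp_sqr_natr_eq // ?ltn_eqF //.
by have := ltn_ord j; have := ltn_ord i; rewrite p_eq; lia.
Qed.

Lemma Fp_two_sign_prod_bin_sqr (u : 'F_p) : u ^+ 2 = 1 ->
  exists2 y : 'F_p, y != 0 & y ^+ 2 = 2 * u * \prod_(r < (2 * m).+1) ('C(2 * m, r))%:R.
Proof.
move=> u2; set f : 'F_p := ((2 * m)`!)%:R.
set G : 'F_p := \prod_(r < (2 * m).+1) (r`!)%:R.
set PC : 'F_p := \prod_(r < (2 * m).+1) ('C(2 * m, r))%:R.
have f2 : f ^+ 2 = -1 by rewrite Fp_fact_half_sqr // exprM sqrrN !expr1n.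
have f_neq0 : f != 0.
  by apply: contra_eq_neq f2 => ->; rewrite expr0n eq_sym oppr_eq0 oner_eq0.
have binG : PC * G ^+ 2 = f * (-1) ^+ m.
  have := congr1 (fun k => k%:R : 'F_p) (prod_bin_fact (2 * m)).
  by rewrite /= natrM !natrX !natr_prod => ->; rewrite exprS exprM f2.
have : PC * G ^+ 2 != 0 by rewrite binG mulf_neq0 ?signr_eq0.
rewrite mulf_eq0 negb_or expf_eq0 /= => /andP[_ G_neq0].
have two_neq0 : (2 : 'F_p) != 0.
  by rewrite -(dvdn_pcharf (pchar_Fp p_pr)) gtnNdvd // p_eq; lia.
have u_neq0 : u != 0.
  by apply: contra_eq_neq u2 => ->; rewrite expr0n eq_sym oner_eq0.
have um2 : (u * (-1) ^+ m) ^+ 2 = 1 by rewrite exprMn u2 sqrr_sign mulr1.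
have [z z2] := sqr_sign_two_sqrtN1 um2 f2.
have : z ^+ 2 != 0 by rewrite z2 !mulf_neq0 ?signr_eq0.
rewrite expf_eq0 /= => z_neq0.
exists (z / G); first by rewrite mulf_neq0 ?invr_neq0.
have PC_eq : PC = f * (-1) ^+ m / G ^+ 2 by rewrite -binG mulfK // expf_neq0.
by rewrite PC_eq expr_div_n z2; field.
Qed.

Variables (d1 d2 : int).

Lemma cor_mx_Fp :
  map_mx (intmul (1 : 'F_p)) (cor_mx m p d1 d2) = V^T *m coef_mx m d1%:~R d2%:~R *m V.
Proof.
rewrite /sqr_vandermonde -(coef_mx_factor _ _ (fun k => k%:R)).
apply/matrixP => j k; rewrite !mxE !rmorphD rmorphM /= !(Fp_euler_criterion p_pr p_eq).
by rewrite rmorphD rmorphB rmorphD rmorphM !rmorphXn /= -!pmulrn.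
Qed.

Lemma det_cor_mx_Fp :
  ((\det (cor_mx m p d1 d2))%:~R : 'F_p) = \det (coef_mx m d1%:~R d2%:~R) * \det V ^+ 2.
Proof. by rewrite -det_map_mx cor_mx_Fp !det_mulmx det_tr; ring. Qed.

Hypotheses (d1_sign : d1 = 1 \/ d1 = -1) (d2_sign : d2 = 1 \/ d2 = -1).

Lemma two_det_cor_mx_sqr :
  exists2 y : 'F_p, y != 0 & y ^+ 2 = 2 * (\det (cor_mx m p d1 d2))%:~R.
Proof.
have sign_sqr (d : int) : d = 1 \/ d = -1 -> (d%:~R : 'F_p) ^+ 2 = 1.
  by case=> ->; rewrite ?rmorph1 ?rmorphN1 ?sqrrN expr1n.
set e : 'F_p := (-1) ^+ (m * (2 * m).+1) * d1%:~R ^+ (2 * m).+1 * d2%:~R ^+ (m * (2 * m).+1).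
have e2 : e ^+ 2 = 1.
  by rewrite !exprMn !(exprAC _ _ 2) sqrrN !sign_sqr // !expr1n !mulr1.
have [y y_neq0 y2] := Fp_two_sign_prod_bin_sqr e2.
exists (y * \det V); first by rewrite mulf_neq0 ?sqr_vandermonde_Fp_neq0.
by rewrite det_cor_mx_Fp det_coef_mx // exprMn y2 /e; ring.
Qed.

End Corollary.

Theorem corollary1p3 (m p : nat) (d1 d2 : int)
    (hp : prime p) (hpm : p = (4 * m + 1)%N)
    (hd1 : d1 = 1 \/ d1 = -1) (hd2 : d2 = 1 \/ d2 = -1) :
  (~~ (p%:Z %| 2 * \det (cor_mx m p d1 d2))%Z /\
   exists x : int, (x ^+ 2 == 2 * \det (cor_mx m p d1 d2) %[mod p%:Z])%Z)
  /\ (\det (cor_mx m p d1 d2) == cor_rhs m d1 d2 %[mod p%:Z])%Z.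
Proof.
have p_eq : p = (2 * (2 * m)).+1 by rewrite hpm; lia.
have m_gt0 : (0 < m)%N by move: (prime_gt1 hp); rewrite hpm; lia.
have [y y_neq0 y2] := two_det_cor_mx_sqr hp p_eq hd1 hd2.
split; last by rewrite Fp_eqz_mod // det_cor_mx_Fp // intr_cor_rhs.
split; last by apply: Fp_sqr_modz => //; exists y; rewrite y2 rmorphM.
by rewrite -Fp_intr_eq0 // rmorphM -y2 expf_neq0.
Qed.
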